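(* Let $k\in\mathbb{Z}$ and let $p,s$ be positive integers with $s<p$. Then $$\sum_{\nu=0}^{p}\binom{p-\nu+1}{s}\binom{p}{\nu}E_{\nu}^{(k)}=\binom{p}{s}E_{p-s}^{(k)}(1)+\binom{p}{s-1}E_{p-s+1}^{(k)}(1).$$
   Context: For $k\in\mathbb{Z}$, $\mathrm{Ei}_k(x)=\sum_{n=1}^{\infty}\frac{x^n}{n^k(n-1)!}$; the poly-Genocchi polynomials $G_n^{(k)}(x)$ are defined by $\frac{2\,\mathrm{Ei}_k(\log(1+t))}{e^t+1}e^{xt}=\sum_{n=0}^{\infty}G_n^{(k)}(x)\frac{t^n}{n!}$; the poly-Euler polynomials are $E_n^{(k)}(x)=\frac{G_{n+1}^{(k)}(x)}{n+1}$ ($n\ge0$), and $E_n^{(k)}=E_n^{(k)}(0)$. *)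

From mathcomp Require Import all_boot all_order all_algebra.
Set Implicit Arguments. Unset Strict Implicit. Unset Printing Implicit Defensive.
Import Order.TTheory GRing.Theory Num.Theory.
Local Open Scope ring_scope.

Definition fps := nat -> rat.

Definition fone : fps := fun n => (n == 0%N)%:R.

Definition fmul (a b : fps) : fps :=
  fun n => \sum_(i < n.+1) a i * b (n - i)%N.

Definition fpow (a : fps) (m : nat) : fps := iter m (fmul a) fone.

Definition fexp (x : rat) : fps := fun n => x ^+ n / (n`!)%:R.

Definition flog1p : fps :=
  fun n => if n is n'.+1 then (-1) ^+ n' / (n'.+1)%:R else 0.

Fixpoint finv_seq (c : fps) (n : nat) : seq rat :=
  if n is n'.+1 then
    let s := finv_seq c n' in
    rcons s (- (c 0%N)^-1 * \sum_(1 <= i < n.+1) c i * nth 0 s (n - i)%N)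
  else [:: (c 0%N)^-1].
Definition finv (c : fps) : fps := fun n => nth 0 (finv_seq c n) n.

(* Ei_k(f) = sum_{m>=1} f^m / (m^k (m-1)!), for a series f with f 0 = 0
   (so only m <= n contributes to the coefficient of t^n). *)
Definition Ei_comp (k : int) (f : fps) : fps :=
  fun n => \sum_(1 <= m < n.+1) fpow f m n / ((m%:R : rat) ^ k * ((m.-1)`!)%:R).

Definition two_over_expp1 : fps :=
  fun n => 2 * finv (fun j => fexp 1 j + (j == 0%N)%:R) n.

(* poly-Genocchi polynomial G_n^{(k)}(x): n! times the t^n-coefficient of
   2 Ei_k(log(1+t)) / (e^t+1) * e^{xt} *)
Definition polyGenocchi (n : nat) (k : int) (x : rat) : rat :=
  (n`!)%:R * fmul (fmul (Ei_comp k flog1p) two_over_expp1) (fexp x) n.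

Definition polyEuler (n : nat) (k : int) (x : rat) : rat :=
  polyGenocchi n.+1 k x / (n.+1)%:R.

From mathcomp Require Import all_boot all_order all_algebra.
From mathcomp Require Import zify ring.
Import Order.TTheory GRing.Theory Num.Theory.
Local Open Scope ring_scope.

(* Since the Genocchi series has no constant term, multiplying it by e^t shows
   that the poly-Euler numbers form an Appell sequence:
   E_n(1) = \sum_j C(n, j) E_j.  Both sides of the identity are therefore
   combinations of the E_nu, and comparing coefficients leaves
   C(p - nu + 1, s) C(p, nu) = C(p, s) C(p - s, nu) + C(p, s - 1) C(p - s + 1, nu),
   which follows from C(m, a) C(m - a, b) = C(m, b) C(m - b, a) and Pascal's rule. *)

Section Binomial.
Local Open Scope nat_scope.

Lemma bin_mul_bin_sub_eq0 m a b : m < a + b -> 'C(m, a) * 'C(m - a, b) = 0.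
Proof.
move=> lt_m_ab; have [le_am | lt_ma] := leqP a m; last by rewrite bin_small.
by rewrite [X in _ * X]bin_small ?muln0 //; lia.
Qed.

Lemma bin_mul_bin_sub_fact m a b : a + b <= m ->
  'C(m, a) * 'C(m - a, b) * (a`! * b`! * (m - a - b)`!) = m`!.
Proof.
move=> le_ab_m.
rewrite -(bin_fact (_ : a <= m)); last by lia.
rewrite -(bin_fact (_ : b <= m - a)); last by lia.
ring.
Qed.

Lemma bin_mul_bin_subC m a b : 'C(m, a) * 'C(m - a, b) = 'C(m, b) * 'C(m - b, a).
Proof.
have [lt_m_ab | le_ab_m] := ltnP m (a + b).
  by rewrite !bin_mul_bin_sub_eq0 // addnC.
apply/eqP; rewrite -(eqn_pmul2r (_ : 0 < a`! * b`! * (m - a - b)`!));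
  last by rewrite !muln_gt0 !fact_gt0.
rewrite bin_mul_bin_sub_fact // -[a`! * b`!]mulnC -subnDA addnC subnDA.
by rewrite bin_mul_bin_sub_fact // addnC.
Qed.

Lemma mul_bin_subS m a b :
  'C(m, b) * 'C(m - b + 1, a.+1)
  = 'C(m, a.+1) * 'C(m - a.+1, b) + 'C(m, a) * 'C(m - a, b).
Proof. by rewrite addn1 binS mulnDr !(bin_mul_bin_subC m b). Qed.

End Binomial.

Lemma sum_bin_widen (R : pzSemiRingType) m N (F : nat -> R) : (m < N)%N ->
  \sum_(j < m.+1) 'C(m, j)%:R * F j = \sum_(j < N) 'C(m, j)%:R * F j.
Proof.
move=> lt_mN; rewrite (big_ord_widen N (fun j => 'C(m, j)%:R * F j)) //.
rewrite big_mkcond; apply: eq_bigr => j _.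
by case: ltnP => // lt_mj; rewrite bin_small ?mul0r.
Qed.

Lemma fmul0 (a b : fps) : fmul a b 0 = a 0%N * b 0%N.
Proof. by rewrite /fmul big_ord1. Qed.

Lemma fmul_fexp0 (a : fps) n : fmul a (fexp 0) n = a n.
Proof.
rewrite /fmul big_ord_recr /= big1 ?add0r => [|i _].
  by rewrite /fexp subnn expr0 fact0 divr1.
by rewrite /fexp (@expr0n rat) subn_eq0 leqNgt ltn_ord /= mul0r mulr0.
Qed.

Lemma fmul_fexp1 (a : fps) n :
  fmul a (fexp 1) n = \sum_(i < n.+1) a i / ((n - i)`!)%:R.
Proof. by apply: eq_bigr => i _; rewrite /fexp expr1n mul1r. Qed.

Section PolyEuler.
Variable k : int.

Definition genocchi_series : fps := fmul (Ei_comp k flog1p) two_over_expp1.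

Lemma genocchi_series0 : genocchi_series 0%N = 0.
Proof. by rewrite /genocchi_series fmul0 /Ei_comp big_geq // mul0r. Qed.

Lemma polyEuler0 n : polyEuler n k 0 = (n`!)%:R * genocchi_series n.+1.
Proof.
rewrite /polyEuler /polyGenocchi fmul_fexp0 -/genocchi_series factS natrM.
by rewrite mulrAC [_ * _^-1]mulrAC mulfV ?pnatr_eq0 ?mul1r.
Qed.

Lemma polyEuler1 n :
  polyEuler n k 1 = \sum_(j < n.+1) 'C(n, j)%:R * polyEuler j k 0.
Proof.
under eq_bigr do rewrite polyEuler0.
rewrite /polyEuler /polyGenocchi fmul_fexp1 -/genocchi_series big_ord_recl.
rewrite genocchi_series0 mul0r add0r factS natrM mulrAC [_ * _^-1]mulrAC.
rewrite mulfV ?pnatr_eq0 // mul1r mulr_sumr; apply: eq_bigr => j _.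
rewrite lift0 subSS -(bin_fact (ltn_ord j : (j <= n)%N)) !natrM.
have nz_fact : ((n - j)`!)%:R != 0 :> rat by rewrite pnatr_eq0 -lt0n fact_gt0.
by field.
Qed.

End PolyEuler.

Theorem lemma8 (k : int) (p s : nat) (hs : (0 < s)%N) (hsp : (s < p)%N) :
  \sum_(0 <= nu < p.+1)
     ('C(p - nu + 1, s))%:R * ('C(p, nu))%:R * polyEuler nu k 0
  = ('C(p, s))%:R * polyEuler (p - s) k 1
    + ('C(p, s.-1))%:R * polyEuler (p - s + 1) k 1.
Proof.
case: s hs hsp => // s _ lt_sp.
rewrite !polyEuler1 !(@sum_bin_widen _ _ p.+1 (fun j => polyEuler j k 0)); [|lia..].
rewrite big_mkord !mulr_sumr -big_split /=; apply: eq_bigr => nu _.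
(* generalizing [E] stops [mulrA] from unfolding [polyEuler] *)
move: (polyEuler nu k 0) => E; rewrite !mulrA -!natrM -mulrDl -natrD.
have -> : (p - s.+1 + 1 = p - s)%N by lia.
by rewrite mulnC mul_bin_subS.
Qed.
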